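(* Let $k$ and $N$ be positive integers and let $\varepsilon=\varepsilon(k,N)\in(0,1/2]$. Set $\kappa=\lfloor 1/\varepsilon\rfloor+1$ and $$V(k)=\max\Big\{\frac{\kappa^{2k-2}}{2}\Big(\varepsilon-\frac1\kappa\Big)^{-1},\ \kappa^{k-1}+\varepsilon\Big\}.$$ If $n_1,\ldots,n_k$ are nonnegative integers with $n_1<n_2<\cdots<n_k\le N$ and $n_k\ge V(k)$, then there exists an integer $$d\in\Big(\frac{n_k}{\kappa^{k-1}+\varepsilon},\ \frac{n_k}{1-\varepsilon}\Big)$$ such that $n_j \bmod d \in[0,\varepsilon d)\cup((1-\varepsilon)d,d)$ for every $j\in\{1,\ldots,k\}$.
   Context: For an integer $n$ and positive integer $d$, $n\bmod d$ denotes the unique $a\in\{0,1,\ldots,d-1\}$ with $n\equiv a\pmod d$. *)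

From HB Require Import structures.
From mathcomp Require Import all_boot all_order all_algebra.
From mathcomp Require Import reals.
Set Implicit Arguments. Unset Strict Implicit. Unset Printing Implicit Defensive.
Import Order.TTheory GRing.Theory Num.Theory.
Local Open Scope ring_scope.

Definition kappa {R : realType} (eps : R) : int := Num.floor (eps^-1) + 1.

Definition Vk {R : realType} (eps : R) (k : nat) : R :=
  let kap : R := (kappa eps)%:~R in
  Num.max (kap ^+ (2 * k - 2)%N / 2 * (eps - kap^-1)^-1)
          (kap ^+ (k - 1)%N + eps).

From HB Require Import structures.
From mathcomp Require Import all_boot all_order all_algebra.
From mathcomp Require Import reals.
From mathcomp Require Import zify ring lra.
Set Implicit Arguments. Unset Strict Implicit. Unset Printing Implicit Defensive.
Import Order.TTheory GRing.Theory Num.Theory.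
Local Open Scope ring_scope.

(* Write K = kappa and M = K^(k-1).  Among the M + 1 multipliers 0, ..., M, two
   place every n_j * m mod n_k (1 <= j < k) in the same of the K cells of width
   n_k / K of [0, n_k); their difference m <= M therefore gives integers q_j with
   |n_j m - q_j n_k| < n_k / K for all j (trivially, with q_k = m, for j = k).
   Let d be the integer nearest to n_k / m, so |m d - n_k| <= m / 2.  Then
   m (n_j - q_j d) = (n_j m - q_j n_k) - q_j (m d - n_k) has size about
   n_k / K + m^2 / 2, and n_k >= V(k) makes this less than eps m d: each n_j is
   within eps d of the multiple q_j d. *)

Lemma increasing_le_last (k : nat) (n : nat -> nat) :
  (forall i, (1 <= i < k)%N -> (n i < n i.+1)%N) ->
  forall j, (1 <= j <= k)%N -> (n j <= n k)%N.
Proof.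
move=> n_incr j jk.
have n_mono : {in [pred i | 1 <= i <= k]%N &, {homo n : i j / (i <= j)%N}}.
  apply: homo_leq_in => [//|a b c|a b|i]; rewrite ?unfold_in /=.
  - exact: leq_trans.
  - by move=> ? ? c; rewrite unfold_in /=; lia.
  - by move=> ? ?; apply/ltnW/n_incr; lia.
by apply: n_mono; rewrite ?unfold_in /=; lia.
Qed.

Section Dirichlet.
Local Open Scope nat_scope.

Lemma same_cell_close (K b x y : nat) : 0 < b ->
  K * (x %% b) %/ b = K * (y %% b) %/ b -> K * `|x %% b - y %% b| < b.
Proof.
move=> b0 same_cell.
have := leq_divM (K * (x %% b)) b; have := ltn_ceil (K * (x %% b)) b0.
have := leq_divM (K * (y %% b)) b; have := ltn_ceil (K * (y %% b)) b0.
by rewrite same_cell; nia.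
Qed.

Lemma simultaneous_dirichlet (r K b : nat) (a : nat -> nat) : 0 < K -> 0 < b ->
  exists2 m, 0 < m <= K ^ r &
    forall i, i < r -> exists q, K * `|a i * m - q * b| < b.
Proof.
move=> K0 b0.
have cellP x : K * (x %% b) %/ b < K by rewrite ltn_divLR // ltn_pmul2l // ltn_pmod.
pose cell (m : 'I_(K ^ r).+1) : {ffun 'I_r -> 'I_K} :=
  [ffun i : 'I_r => Ordinal (cellP (a i * m))].
have /injectivePn [m1 [m2 ne same]] : ~~ injectiveb cell.
  by apply/injectiveP => /leq_card; rewrite card_ffun !card_ord ltnn.
wlog lt12 : m1 m2 {ne} same / m1 < m2.
  move=> wlog_lt; case: (ltngtP m1 m2) => [lt|gt|eq].
  - exact: wlog_lt same lt.
  - exact: wlog_lt (esym same) gt.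
  - by move: ne; rewrite (val_inj eq) eqxx.
exists (m2 - m1); first by have := ltn_ord m2; lia.
move=> i ir; exists (a i * m2 %/ b - a i * m1 %/ b).
have := congr1 (fun f : {ffun 'I_r -> 'I_K} => val (f (Ordinal ir))) same.
rewrite !ffunE /= => /(same_cell_close b0).
have le12 : a i * m1 <= a i * m2 by rewrite leq_mul2l ltnW ?orbT.
have := leq_mul (leq_div2r b le12) (leqnn b); rewrite mulnBr mulnBl.
move: le12 (divn_eq (a i * m1) b) (divn_eq (a i * m2) b).
move: (a i * m1) (a i * m2) => x1 x2 le12 e1 e2 le_qb.
suff -> : `|(x2 - x1)%N - (x2 %/ b * b - x1 %/ b * b)%N| = `|(x1 %% b)%N - (x2 %% b)%N| by [].
lia.
Qed.

Lemma dirichlet_upto_last (k K : nat) (n : nat -> nat) : 0 < K -> 0 < n k ->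
  exists2 m, 0 < m <= K ^ (k - 1) &
    forall j, 1 <= j <= k -> exists q, K * `|n j * m - q * n k| < n k.
Proof.
move=> K0 nk0.
have [m m_range close] := simultaneous_dirichlet (k - 1) (fun i => n i.+1) K0 nk0.
exists m => // j /andP [j_gt0]; rewrite leq_eqVlt => /orP [/eqP -> | j_lt].
  by exists m; rewrite [n k * m]mulnC subrr muln0.
have := close j.-1; rewrite prednK //; apply.
by rewrite leq_subRL ?add1n // (leq_ltn_trans _ j_lt).
Qed.

Lemma approx_quotient_le (K b a m q : nat) : 0 < K -> a <= b ->
  K * `|a * m - q * b| < b -> q <= m.
Proof.
move=> K0 ab close; rewrite leqNgt; apply/negP => mq.
have : m.+1 * b <= q * b by rewrite leq_mul2r mq orbT.
have : a * m <= b * m by rewrite leq_mul2r ab orbT.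
have : `|a * m - q * b| <= K * `|a * m - q * b| by rewrite leq_pmull.
lia.
Qed.

End Dirichlet.

Lemma natr_distn (R : numDomainType) (a b : nat) :
  (`|a - b|%N)%:R = `|a%:R - b%:R| :> R.
Proof. by rewrite natr_absz intr_norm rmorphB. Qed.

Lemma round_div_near (R : numFieldType) (n m : nat) : (0 < m)%N ->
  `|m%:R * ((2 * n + m) %/ (2 * m))%:R - n%:R| <= m%:R / 2 :> R.
Proof.
move=> m0; rewrite -natrM -natr_distn ler_pdivlMr // mulrC -natrM ler_nat.
have := leq_divM (2 * n + m) (2 * m); have := ltn_ceil (2 * n + m) (_ : 0 < 2 * m)%N.
lia.
Qed.

Definition near_multiple {R : numDomainType} (eps : R) (d x : nat) : Prop :=
  ((x %% d)%N)%:R < eps * d%:R \/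
  ((1 - eps) * d%:R < ((x %% d)%N)%:R /\ ((x %% d)%N)%:R < (d%:R : R)).

Lemma near_multiple_of_dist (R : realFieldType) (eps : R) (x q d : nat) :
  (0 < d)%N -> eps <= 2^-1 -> `|x%:R - (q * d)%:R| < eps * d%:R ->
  near_multiple eps d x.
Proof.
rewrite /near_multiple => d0 e2; rewrite ltr_norml => /andP [lo hi].
have dR : 0 < d%:R :> R by rewrite ltr0n.
have ed : eps * d%:R <= d%:R / 2 :> R.
  by rewrite mulrC ler_wpM2l ?ler0n.
case: (leqP (q * d) x) => qd_x.
- left; have lt_d : (x - q * d < d)%N by rewrite -(ltr_nat R) natrB //; lra.
  by rewrite -(subnKC qd_x) modnMDl modn_small // natrB //; lra.
- right; split; last by rewrite ltr_nat ltn_pmod.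
  case: q qd_x lo hi => [|q]; first by rewrite mul0n.
  rewrite mulSn natrD => qd_x lo hi.
  have qd_le : (q * d <= x)%N by rewrite -(ler_nat R); lra.
  rewrite -(subnKC qd_le) modnMDl modn_small; last by lia.
  rewrite natrB //; lra.
Qed.

Lemma approx_by_rounded_quotient (R : realFieldType) (K eps nk m q x D : R) :
  0 < eps -> eps <= 2^-1 -> 1 < eps * K -> 1 <= m -> 0 <= q -> (q = m \/ q <= m - 1) ->
  x <= nk -> K * m <= nk -> K * m ^+ 2 / 2 <= (eps * K - 1) * nk ->
  K * `|x * m - q * nk| < nk -> `|m * D - nk| <= m / 2 ->
  `|x - q * D| < eps * D.
Proof.
move=> e0 e2 t1 m1 q0 qm xn Km hM close round.
have K0 : 0 < K by nra.
have Km0 : 0 < K * m by nra.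
rewrite -(ltr_pM2l Km0) -[K * m in X in X < _]gtr0_norm // -normrM.
have -> : K * m * (x - q * D) = K * (x * m - q * nk) - K * q * (m * D - nk) by ring.
have -> : K * m * (eps * D) = eps * K * nk + K * eps * (m * D - nk) by ring.
rewrite -[K in K * `|_|]gtr0_norm // -normrM in close.
move: close round; rewrite expr2 in hM; rewrite ltr_norml ler_norml.
set r := x * m - q * nk; set E := m * D - nk; move=> /andP [r_lo r_hi] /andP [E_lo E_hi].
have q_le : q <= m by case: qm => [->|]; lra.
rewrite ltr_norml; case: (lerP 0 E) => E0.
- have mE : (m - eps) * E <= m * (m / 2) by apply: ler_pM; lra.
  have KmE : K * ((m - eps) * E) <= K * (m * (m / 2)) by apply: ler_wpM2l; lra.
  have Kq : K * (q * E) <= K * (m * E) by apply: ler_wpM2l; nra.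
  have KqE0 : 0 <= K * (q * E) by rewrite !mulr_ge0 // ltW.
  have KeE : 0 <= K * eps * E by rewrite !mulr_ge0 // ltW.
  lra.
have eF : K * (eps * - E) <= K * (m * m / 2).
  by apply: ler_wpM2l; nra.
have KqF : 0 <= K * (q * - E) by rewrite !mulr_ge0 // ltW //; lra.
apply/andP; split; first by lra.
case: qm => [q_eq|q_lt].
- have r0 : K * r <= 0.
    by rewrite /r q_eq; nra.
  have mF : K * ((m + eps) * - E) <= K * (m * m / 2 + m / 4).
    by apply: ler_wpM2l; nra.
  rewrite q_eq; lra.
- have mF : K * ((q + eps) * - E) <= K * (m * m / 2).
    by apply: ler_wpM2l; nra.
  lra.
Qed.

Lemma rounded_quotient_range (R : realFieldType) (K eps nk m M D : R) :
  0 < eps -> eps <= 2^-1 -> 1 < eps * K -> 1 <= m -> m <= M -> K * M ^+ 2 <= nk ->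
  `|m * D - nk| <= m / 2 -> nk < D * (M + eps) /\ D * (1 - eps) < nk.
Proof.
move=> e0 e2 t1 m1 mM KM round; move: round; rewrite ler_norml => /andP [lo hi].
have K0 : 0 < K by nra.
have MM : M <= M ^+ 2 by rewrite expr2; nra.
have D_lo : K * M - 1 / 2 <= D.
  have KmM : K * M * m <= K * M * M by apply: ler_wpM2l; nra.
  have : m * (K * M - 1 / 2) <= m * D by rewrite expr2 in KM; lra.
  by rewrite ler_pM2l //; lra.
have D_hi : D <= nk + 1 / 2.
  have nk0 : 0 <= nk by apply: le_trans KM; rewrite mulr_ge0 ?sqr_ge0 ?ltW.
  have : m * D <= m * (nk + 1 / 2) by nra.
  by rewrite ler_pM2l //; lra.
split.
  have DmM : D * m <= D * M by apply: ler_wpM2l; nra.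
  have eD : eps * (K * M - 1 / 2) <= eps * D by apply: ler_wpM2l; lra.
  have eKM : M < eps * K * M by nra.
  nra.
have : 1 < eps * nk by rewrite expr2 in KM MM; nra.
nra.
Qed.

Section Kappa.
Variables (R : realType) (eps : R).
Hypothesis eps_gt0 : 0 < eps.

Lemma kappa_ge0 : 0 <= kappa eps.
Proof. by rewrite /kappa addr_ge0 // floor_ge0 invr_ge0 ltW. Qed.

Lemma kappa_gt_inv : eps^-1 < (kappa eps)%:~R.
Proof. exact: floorD1_gt. Qed.

Lemma mul_kappa_gt1 : 1 < eps * (kappa eps)%:~R.
Proof.
by rewrite -[X in X < _](mulfV (lt0r_neq0 eps_gt0)) ltr_pM2l // kappa_gt_inv.
Qed.

Lemma mul_kappa_le : eps * (kappa eps)%:~R <= 1 + eps.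
Proof.
have : (kappa eps)%:~R <= eps^-1 + 1 :> R.
  by rewrite /kappa intrD lerD2r floor_le.
by move/(ler_wpM2l (ltW eps_gt0)); rewrite mulrDr mulfV ?lt0r_neq0 // mulr1.
Qed.

Lemma Vk_le_mul (k : nat) (x : R) : Vk eps k <= x ->
  (kappa eps)%:~R * ((kappa eps)%:~R ^+ (k - 1)) ^+ 2 / 2 <=
    (eps * (kappa eps)%:~R - 1) * x.
Proof.
rewrite /Vk ge_max => /andP [le_x _].
have gap_gt0 : 0 < eps * (kappa eps)%:~R - 1 by rewrite subr_gt0 mul_kappa_gt1.
move: gap_gt0 le_x; set kap : R := (kappa eps)%:~R => gap_gt0.
have kap_gt0 : 0 < kap by apply: lt_trans (kappa_gt_inv); rewrite invr_gt0.
have -> : eps - kap^-1 = (eps * kap - 1) / kap by field; rewrite lt0r_neq0.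
rewrite invf_div mulrA ler_pdivrMr // -exprM mulnC mulnBl mul1n.
lra.
Qed.

Lemma Vk_le_bound (k : nat) (x : R) : eps <= 2^-1 -> Vk eps k <= x ->
  (kappa eps)%:~R * ((kappa eps)%:~R ^+ (k - 1)) ^+ 2 <= x.
Proof.
move=> eps_le /Vk_le_mul; have := mul_kappa_le; have := mul_kappa_gt1.
have : 0 <= (kappa eps)%:~R :> R by rewrite ler0z kappa_ge0.
set kap : R := (kappa eps)%:~R => kap_ge0 gt1 le1 le_x.
have x_ge0 : 0 <= x.
  have gap : 0 < eps * kap - 1 by rewrite subr_gt0.
  rewrite -(pmulr_rge0 _ gap); apply: le_trans le_x.
  by rewrite divr_ge0 ?mulr_ge0 ?exprn_ge0.
have : (eps * kap - 1) * x <= 2^-1 * x by rewrite ler_wpM2r //; lra.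
lra.
Qed.

Lemma kappa_natE : (kappa eps)%:~R = (`|kappa eps|%N)%:R :> R.
Proof. by rewrite natr_absz ger0_norm // kappa_ge0. Qed.
End Kappa.

Lemma near_multiple_of_approx (R : realFieldType) (eps : R) (K nk m M q x d : nat) :
  0 < eps -> eps <= 2^-1 -> 1 < eps * K%:R -> (0 < m <= M)%N -> (x <= nk)%N ->
  K%:R * M%:R ^+ 2 <= nk%:R :> R -> K%:R * M%:R ^+ 2 / 2 <= (eps * K%:R - 1) * nk%:R ->
  (K * `|x * m - q * nk| < nk)%N -> `|m%:R * d%:R - nk%:R| <= m%:R / 2 :> R -> (0 < d)%N ->
  near_multiple eps d x.
Proof.
move=> e0 e2 t1 /andP [m0 mM] xn KM hM close round d0.
have K0 : (0 < K)%N by rewrite -(ltr0n R); nra.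
have [m1 mMR] : 1 <= m%:R :> R /\ m%:R <= M%:R :> R by rewrite ler1n ler_nat.
have mm : K%:R * m%:R ^+ 2 <= K%:R * M%:R ^+ 2 :> R.
  by rewrite ler_wpM2l // lerXn2r ?nnegrE.
have qm := approx_quotient_le K0 xn close.
apply: (near_multiple_of_dist (q := q) d0 e2); rewrite natrM.
apply: (@approx_by_rounded_quotient R K%:R eps nk%:R m%:R) => //.
- have [->|q_ne] := eqVneq q m; [by left | right].
  by rewrite lerBrDr natr1 ler_nat ltn_neqAle q_ne qm.
- by rewrite ler_nat.
- apply: le_trans (le_trans mm KM); rewrite ler_wpM2l // expr2 ler_peMl //; lra.
- by lra.
- by rewrite -!natrM -natr_distn -natrM ltr_nat.
Qed.

Theorem lemma3 (R : realType) (k N : nat) (eps : R) (n : nat -> nat) :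
  (0 < k)%N -> (0 < N)%N ->
  0 < eps -> eps <= 2^-1 ->
  (forall i : nat, (1 <= i < k)%N -> (n i < n i.+1)%N) ->
  (n k <= N)%N ->
  Vk eps k <= ((n k)%:R : R) ->
  exists d : nat,
    (n k)%:R / (((kappa eps)%:~R : R) ^+ (k - 1)%N + eps) < d%:R /\
    d%:R < (n k)%:R / (1 - eps) /\
    (forall j : nat, (1 <= j <= k)%N ->
       (((n j %% d)%N)%:R < eps * d%:R \/
        ((1 - eps) * d%:R < ((n j %% d)%N)%:R /\ ((n j %% d)%N)%:R < (d%:R : R)))).
Proof.
move=> _ _ eps_gt0 eps_le n_incr _ le_Vk.
have := Vk_le_bound eps_gt0 eps_le le_Vk; have := Vk_le_mul eps_gt0 le_Vk.
have := mul_kappa_gt1 eps_gt0; rewrite (kappa_natE eps_gt0).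
set K := `|kappa eps|%N; pose M := (K ^ (k - 1))%N.
have -> : K%:R ^+ (k - 1) = M%:R :> R by rewrite natrX.
move=> gt1 bound KM2.
have K_gt0 : (0 < K)%N by rewrite -(ltr0n R); nra.
have nk_gt0 : (0 < n k)%N.
  rewrite -(ltr0n R); apply: lt_le_trans KM2.
  by rewrite mulr_gt0 ?exprn_gt0 ?ltr0n ?expn_gt0 ?K_gt0.
have [m m_range close] := dirichlet_upto_last K_gt0 nk_gt0.
have [m1 mM] : 1 <= m%:R :> R /\ m%:R <= M%:R :> R.
  by rewrite ler1n ler_nat; case/andP: m_range.
pose d := ((2 * n k + m) %/ (2 * m))%N.
have round : `|m%:R * d%:R - (n k)%:R| <= m%:R / 2 :> R.
  by apply: round_div_near; case/andP: m_range.
have [d_lo d_hi] := rounded_quotient_range eps_gt0 eps_le gt1 m1 mM KM2 round.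
have d_gt0 : (0 < d)%N.
  by rewrite lt0n; apply: contraTneq d_lo => ->; rewrite mul0r -leNgt.
exists d; split; first by rewrite ltr_pdivrMr ?ltr_wpDl.
split; first by rewrite ltr_pdivlMr ?subr_gt0 //; lra.
move=> j j_range; have [q close_j] := close j j_range.
exact: near_multiple_of_approx eps_gt0 eps_le gt1 m_range
  (increasing_le_last n_incr j_range) KM2 bound close_j round d_gt0.
Qed.
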